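(* Let $\mathcal{T}=\{0,1\}$, let $P\in\Delta_{\mathcal{T},\mathcal{X},\mathcal{Y}}$ with $P(T=0)>0$ and $P(T=1)>0$, and for $t\in\{0,1\}$ write $\bar t=1-t$. Then: (1) If $\mathcal{X}_0\cap\mathcal{X}_1=\emptyset$, then $T$ is conditionally independent of $Y$ given $X$ under every $Q\in\Delta_P$. (2) If $\mathcal{Y}_0\cap\mathcal{Y}_1=\emptyset$, then $T$ is conditionally independent of $X$ given $Y$ under every $Q\in\Delta_P$. (3) Suppose $\mathcal{X}_0\cap\mathcal{X}_1\neq\emptyset\neq\mathcal{Y}_0\cap\mathcal{Y}_1$. (a) If some $t\in\{0,1\}$ satisfies $\mathcal{X}_t\setminus\mathcal{X}_{\bar t}\ne\emptyset$ and $\mathcal{Y}_t\setminus\mathcal{Y}_{\bar t}\neq\emptyset$, then $\arg\max_{Q\in\Delta_P}H_Q(T\mid X,Y)$ does not intersect the relative interior of $\Delta_P$. (b) If $\mathcal{X}_t\setminus\mathcal{X}_{\bar t}\ne\emptyset$ for some $t$ and there exists $Q^*$ in the relative interior of $\Delta_P$ with $Q^*\in\arg\max_{Q\in\Delta_P}H_Q(T\mid X,Y)$, then under the conditional distribution $Q^*(\cdot\mid Y\in\mathcal{Y}_t)$, $T$ is conditionally independent of $Y$ given $X$. (c) If $\mathcal{Y}_t\setminus\mathcal{Y}_{\bar t}\ne\emptyset$ for some $t$ and there exists $Q^*$ in the relative interior of $\Delta_P$ with $Q^*\in\arg\max_{Q\in\Delta_P}H_Q(T\mid X,Y)$, then under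 the conditional distribution $Q^*(\cdot\mid X\in\mathcal{X}_t)$, $T$ is conditionally independent of $X$ given $Y$.
   Context: $T,X,Y$ are random variables with finite state spaces $\mathcal{T},\mathcal{X},\mathcal{Y}$; $\Delta_{\mathcal{T},\mathcal{X},\mathcal{Y}}$ is the set of all joint distributions on $\mathcal{T}\times\mathcal{X}\times\mathcal{Y}$. For $P\in\Delta_{\mathcal{T},\mathcal{X},\mathcal{Y}}$, $\Delta_P=\{Q\in\Delta_{\mathcal{T},\mathcal{X},\mathcal{Y}}: Q(X=x,T=t)=P(X=x,T=t),\ Q(Y=y,T=t)=P(Y=y,T=t)\ \forall x,y,t\}$. For $t$ with $P(T=t)>0$: $\mathcal{X}_t=\{x: P(X=x\mid T=t)>0\}$, $\mathcal{Y}_t=\{y: P(Y=y\mid T=t)>0\}$. *)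

From mathcomp Require Import all_boot.
From Stdlib Require Import Reals.
Set Implicit Arguments. Unset Strict Implicit. Unset Printing Implicit Defensive.
Open Scope R_scope.

Section Defs.
Variables (X Y : finType).

(* A (not necessarily normalized) function on T x X x Y, with T = {0,1} = bool
   (false = 0, true = 1). *)
Definition fun3 := bool -> X -> Y -> R.

Definition sum3 (Q : fun3) : R :=
  \big[Rplus/0]_(t : bool) \big[Rplus/0]_(x : X) \big[Rplus/0]_(y : Y) Q t x y.

Definition pT  (Q : fun3) t   := \big[Rplus/0]_(x : X) \big[Rplus/0]_(y : Y) Q t x y.
Definition pX  (Q : fun3) x   := \big[Rplus/0]_(t : bool) \big[Rplus/0]_(y : Y) Q t x y.
Definition pY  (Q : fun3) y   := \big[Rplus/0]_(t : bool) \big[Rplus/0]_(x : X) Q t x y.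
Definition pTX (Q : fun3) t x := \big[Rplus/0]_(y : Y) Q t x y.
Definition pTY (Q : fun3) t y := \big[Rplus/0]_(x : X) Q t x y.
Definition pXY (Q : fun3) x y := \big[Rplus/0]_(t : bool) Q t x y.

Definition is_dist (Q : fun3) : Prop :=
  (forall t x y, 0 <= Q t x y) /\ sum3 Q = 1.

Definition in_DeltaP (P Q : fun3) : Prop :=
  is_dist Q /\
  (forall t x, pTX Q t x = pTX P t x) /\
  (forall t y, pTY Q t y = pTY P t y).

Definition inXt (P : fun3) (t : bool) (x : X) : Prop := 0 < pTX P t x / pT P t.
Definition inYt (P : fun3) (t : bool) (y : Y) : Prop := 0 < pTY P t y / pT P t.

Definition CI_T_Y_given_X (Q : fun3) : Prop :=
  forall t x y, Q t x y * pX Q x = pTX Q t x * pXY Q x y.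
Definition CI_T_X_given_Y (Q : fun3) : Prop :=
  forall t x y, Q t x y * pY Q y = pTY Q t y * pXY Q x y.

Definition condH (Q : fun3) : R :=
  - sum3 (fun t x y =>
      if Rlt_dec 0 (Q t x y) then Q t x y * ln (Q t x y / pXY Q x y) else 0).

Definition is_argmax_condH (P Q : fun3) : Prop :=
  in_DeltaP P Q /\ forall Q', in_DeltaP P Q' -> condH Q' <= condH Q.

Definition in_aff_DeltaP (P Q : fun3) : Prop :=
  exists l : seq (R * fun3),
    \big[Rplus/0]_(p <- l) p.1 = 1 /\
    (forall p, List.In p l -> in_DeltaP P p.2) /\
    (forall t x y, Q t x y = \big[Rplus/0]_(p <- l) (p.1 * p.2 t x y)).

Definition in_relint_DeltaP (P Q : fun3) : Prop :=
  in_DeltaP P Q /\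
  exists eps, 0 < eps /\
    forall Q', in_aff_DeltaP P Q' ->
      (forall t x y, Rabs (Q' t x y - Q t x y) < eps) -> in_DeltaP P Q'.

Definition indYt (P : fun3) t y : R := if Rlt_dec 0 (pTY P t y / pT P t) then 1 else 0.
Definition indXt (P : fun3) t x : R := if Rlt_dec 0 (pTX P t x / pT P t) then 1 else 0.

Definition cond_on_Yt (P Q : fun3) (t : bool) : fun3 :=
  fun t' x y => Q t' x y * indYt P t y / sum3 (fun t'' x' y' => Q t'' x' y' * indYt P t y').
Definition cond_on_Xt (P Q : fun3) (t : bool) : fun3 :=
  fun t' x y => Q t' x y * indXt P t x / sum3 (fun t'' x' y' => Q t'' x' y' * indXt P t x').

End Defs.

From mathcomp Require Import all_boot.
From Stdlib Require Import Reals Lra FunctionalExtensionality.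
From HB Require Import structures.
Set Warnings "-notation-overridden -redundant-canonical-projection".
Set Implicit Arguments. Unset Strict Implicit.
Open Scope R_scope.

(* Every Q in Delta_P vanishes at (t, x, y) as soon as x is not in X_t or y is not in Y_t.
   If X_0 and X_1 are disjoint, each row x thus carries mass of a single value of T, which
   is the conditional independence of T and Y given X. Exchanging the roles of X and Y
   gives (2) from (1) and (c) from (b).

   A point Q of the relative interior of Delta_P is positive on X_t x Y_t, and it can be
   moved a little along every basic move of Delta_P: mass of T = t is shifted around a
   rectangle {xa, xb} x {ya, yb} of X_t x Y_t, which keeps both marginals. H(T | X, Y) is a
   sum of one entropy per cell (x, y), and when row xb carries no mass of ~~ t only the
   cells (xa, ya) and (xa, yb) change. In (a), with xb and yb exclusive to t, the move only
   adds mass to the unique mixed cell (xa, ya), which strictly increases the entropy. In (b),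
   optimality against the moves in both directions forces
   Q(t,x,y) Q(~~t,x,y') = Q(t,x,y') Q(~~t,x,y) for all y, y' in Y_t (a subset of Y_{~~t}
   by (a)), which is the cross-ratio form of conditional independence on {Y in Y_t}. *)

Lemma RplusA : associative Rplus. Proof. by move=> *; rewrite Rplus_assoc. Qed.
Lemma RmultA : associative Rmult. Proof. by move=> *; rewrite Rmult_assoc. Qed.
HB.instance Definition _ := Monoid.isComLaw.Build R 0 Rplus RplusA Rplus_comm Rplus_0_l.
HB.instance Definition _ := Monoid.isComLaw.Build R 1 Rmult RmultA Rmult_comm Rmult_1_l.
HB.instance Definition _ := Monoid.isMulLaw.Build R 0 Rmult Rmult_0_l Rmult_0_r.
HB.instance Definition _ :=
  Monoid.isAddLaw.Build R Rmult Rplus Rmult_plus_distr_r Rmult_plus_distr_l.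

Section RealSums.
Variable I : finType.
Implicit Types F : I -> R.

Lemma sumR_ge0 F : (forall i, 0 <= F i) -> 0 <= \big[Rplus/0]_i F i.
Proof. by move=> F_ge0; apply: big_ind => //; [lra | move=> a b; lra]. Qed.

Lemma sumR_ge_term F j : (forall i, 0 <= F i) -> F j <= \big[Rplus/0]_i F i.
Proof.
move=> F_ge0; rewrite (bigD1 j) //=.
have : 0 <= \big[Rplus/0]_(i | i != j) F i by apply: big_ind => //; [lra | move=> a b; lra].
lra.
Qed.

Lemma sumR_eq0_term F j : (forall i, 0 <= F i) -> \big[Rplus/0]_i F i = 0 -> F j = 0.
Proof. by move=> F_ge0 F0; have := sumR_ge_term j F_ge0; have := F_ge0 j; lra. Qed.

Lemma sumR_supp2 F a b : a != b ->
  (forall i, i != a -> i != b -> F i = 0) -> \big[Rplus/0]_i F i = F a + F b.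
Proof.
move=> ab F0; rewrite (bigD1 a) //= (bigD1 b) /=; last by rewrite eq_sym.
rewrite big1 ?Rplus_0_r // => i /andP [ia ib]; exact: F0.
Qed.

End RealSums.

Section Transposition.
Variables X Y : finType.
Implicit Types P Q : fun3 X Y.

Definition swapXY Q : fun3 Y X := fun t y x => Q t x y.

Lemma sum3_swapXY Q : sum3 (swapXY Q) = sum3 Q.
Proof. by apply: eq_bigr => t _; rewrite exchange_big. Qed.

Lemma pT_swapXY Q t : pT (swapXY Q) t = pT Q t.
Proof. exact: exchange_big. Qed.

Lemma inXt_swapXY P t y : inXt (swapXY P) t y = inYt P t y.
Proof. by rewrite /inXt pT_swapXY. Qed.

Lemma inYt_swapXY P t x : inYt (swapXY P) t x = inXt P t x.
Proof. by rewrite /inYt pT_swapXY. Qed.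

Lemma is_dist_swapXY Q : is_dist Q -> is_dist (swapXY Q).
Proof. by case=> Q_ge0 Q1; split=> [t y x|]; [apply: Q_ge0 | rewrite sum3_swapXY]. Qed.

Lemma in_DeltaP_swapXY P Q : in_DeltaP P Q -> in_DeltaP (swapXY P) (swapXY Q).
Proof. by case=> /is_dist_swapXY Qd [QX QY]. Qed.

Lemma in_aff_DeltaP_swapXY P Q : in_aff_DeltaP P Q -> in_aff_DeltaP (swapXY P) (swapXY Q).
Proof.
case=> l [l1 [lP lQ]]; exists [seq (p.1, swapXY p.2) | p <- l]; split; [|split].
- by rewrite big_map.
- move=> p /List.in_map_iff [q [<- ql]]; exact/in_DeltaP_swapXY/lP.
- by move=> t y x; rewrite big_map /swapXY lQ.
Qed.

Lemma condH_swapXY Q : condH (swapXY Q) = condH Q.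
Proof. by rewrite /condH -[in RHS]sum3_swapXY. Qed.

Lemma swapXY_cond_on_Xt P Q t :
  swapXY (cond_on_Xt P Q t) = cond_on_Yt (swapXY P) (swapXY Q) t.
Proof.
do 3 apply: functional_extensionality => ?.
by rewrite /swapXY /cond_on_Xt /cond_on_Yt /indYt /indXt pT_swapXY -[in LHS]sum3_swapXY.
Qed.

Lemma CI_T_X_given_Y_of_swapXY Q : CI_T_Y_given_X (swapXY Q) -> CI_T_X_given_Y Q.
Proof. by move=> CI t x y; apply: CI. Qed.

End Transposition.

Lemma in_relint_DeltaP_swapXY (X Y : finType) (P Q : fun3 X Y) :
  in_relint_DeltaP P Q -> in_relint_DeltaP (swapXY P) (swapXY Q).
Proof.
case=> /in_DeltaP_swapXY QD [eps [eps_gt0 rel]]; split=> //; exists eps; split=> // Q' Q'aff Q'near.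
exact/in_DeltaP_swapXY/rel/(fun t x y => Q'near t y x)/in_aff_DeltaP_swapXY.
Qed.

Lemma is_argmax_condH_swapXY (X Y : finType) (P Q : fun3 X Y) :
  is_argmax_condH P Q -> is_argmax_condH (swapXY P) (swapXY Q).
Proof.
case=> /in_DeltaP_swapXY QD Qmax; split=> // Q' /in_DeltaP_swapXY Q'D.
by rewrite -(condH_swapXY Q') (condH_swapXY Q); apply: Qmax.
Qed.

Section Support.
Variables X Y : finType.
Implicit Types P Q M : fun3 X Y.

Lemma inXt_dec P t x : {inXt P t x} + {~ inXt P t x}.
Proof. exact: Rlt_dec. Qed.

Lemma inYt_dec P t y : {inYt P t y} + {~ inYt P t y}.
Proof. exact: Rlt_dec. Qed.

Lemma pTX_eq0_notXt P t x : is_dist P -> ~ inXt P t x -> pTX P t x = 0.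
Proof.
move=> [P_ge0 _] Px.
have pTX_ge0 : 0 <= pTX P t x by apply: sumR_ge0.
have pTX_le : pTX P t x <= pT P t.
  by apply: (sumR_ge_term (F := fun x => pTX P t x)) => x'; apply: sumR_ge0.
case: (Rle_lt_or_eq_dec _ _ pTX_ge0) => // pTX_gt0.
by case: Px; apply: Rdiv_lt_0_compat; lra.
Qed.

Lemma in_DeltaP_eq0_notXt P Q t x : is_dist P -> in_DeltaP P Q -> ~ inXt P t x ->
  forall y, Q t x y = 0.
Proof.
move=> HP [[Q_ge0 _] [QX _]] Px y; apply: (sumR_eq0_term (F := fun y => Q t x y)) => //.
by rewrite -/(pTX Q t x) QX pTX_eq0_notXt.
Qed.

Lemma CI_T_Y_given_X_of_cross M :
  (forall x y y', M true x y * M false x y' = M true x y' * M false x y) ->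
  CI_T_Y_given_X M.
Proof.
move=> cross t x y; rewrite /pX /pXY !big_bool /=.
have E : M true x y * pTX M false x = pTX M true x * M false x y.
  rewrite /pTX big_distrr big_distrl /=.
  by apply: eq_bigr => y' _; rewrite cross; ring.
by case: t; rewrite -/(pTX M true x) -/(pTX M false x); nra.
Qed.

Lemma CI_T_Y_given_X_of_disjoint P Q : is_dist P ->
  (~ exists x, inXt P false x /\ inXt P true x) -> in_DeltaP P Q -> CI_T_Y_given_X Q.
Proof.
move=> HP disj HQ; apply: CI_T_Y_given_X_of_cross => x y y'.
case: (inXt_dec P false x) => Px0.
- have Px1 : ~ inXt P true x by move=> Px1; apply: disj; exists x.
  by rewrite !(in_DeltaP_eq0_notXt HP HQ Px1); ring.
- by rewrite !(in_DeltaP_eq0_notXt HP HQ Px0); ring.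
Qed.

End Support.

Lemma in_DeltaP_eq0_notYt (X Y : finType) (P Q : fun3 X Y) t y :
  is_dist P -> in_DeltaP P Q -> ~ inYt P t y -> forall x, Q t x y = 0.
Proof.
move=> /is_dist_swapXY HP /in_DeltaP_swapXY HQ Py.
by apply: (in_DeltaP_eq0_notXt HP HQ); rewrite inXt_swapXY.
Qed.

Lemma CI_T_X_given_Y_of_disjoint (X Y : finType) (P Q : fun3 X Y) : is_dist P ->
  (~ exists y, inYt P false y /\ inYt P true y) -> in_DeltaP P Q -> CI_T_X_given_Y Q.
Proof.
move=> /is_dist_swapXY HP disj /in_DeltaP_swapXY HQ.
apply/CI_T_X_given_Y_of_swapXY/(CI_T_Y_given_X_of_disjoint HP _ HQ).
by case=> y; rewrite !inXt_swapXY => Py; apply: disj; exists y.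
Qed.

Definition xlnr (u v : R) : R := if Rlt_dec 0 u then u * ln (u / v) else 0.

Lemma ln_div x y : 0 < x -> 0 < y -> ln (x / y) = ln x - ln y.
Proof. by move=> x_gt0 y_gt0; rewrite ln_mult ?ln_Rinv //; apply: Rinv_0_lt_compat. Qed.

(* [negH2 a b = - (a + b) h(a / (a + b))] with [h] the binary entropy: the contribution of
   a cell with masses [a] and [b] of T = true and T = false to [- H(T | X, Y)]. *)
Definition negH2 (a b : R) : R := xlnr a (a + b) + xlnr b (a + b).

Lemma negH2C a b : negH2 a b = negH2 b a.
Proof. by rewrite /negH2 Rplus_comm (Rplus_comm a b). Qed.

Lemma negH2_0r a : negH2 a 0 = 0.
Proof.
rewrite /negH2 /xlnr Rplus_0_r.
by destruct (Rlt_dec 0 a), (Rlt_dec 0 0); rewrite /= ?Rdiv_diag ?ln_1; lra.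
Qed.

Lemma negH2_pos a b : 0 < a -> 0 < b ->
  negH2 a b = a * ln a + b * ln b - (a + b) * ln (a + b).
Proof.
move=> a_gt0 b_gt0; rewrite /negH2 /xlnr.
by destruct (Rlt_dec 0 a), (Rlt_dec 0 b); rewrite /= ?ln_div; lra.
Qed.

Lemma xlnx_tangent u v : 0 < u -> 0 < v -> u * ln u + (v - u) * (ln u + 1) <= v * ln v.
Proof.
move=> u_gt0 v_gt0.
have : ln (u / v) <= u / v - 1.
  by have := exp_ineq1_le (ln (u / v)); rewrite exp_ln; [lra | exact: Rdiv_lt_0_compat].
rewrite ln_div // => ln_le.
have : v * (ln u - ln v) <= v * (u / v - 1) by apply: Rmult_le_compat_l; lra.
have -> : v * (u / v - 1) = u - v by field; lra.
nra.
Qed.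

(* Tangent-line bounds for [x ln x] at [a'] and at [a + b]. *)
Lemma negH2_change a a' b : 0 < a -> 0 < a' -> 0 < b ->
  negH2 a' b - negH2 a b <= (a' - a) * (ln a' - ln (a + b)).
Proof.
move=> a_gt0 a'_gt0 b_gt0; rewrite !negH2_pos //.
have := xlnx_tangent a'_gt0 a_gt0.
have := @xlnx_tangent (a + b) (a' + b) ltac:(lra) ltac:(lra).
nra.
Qed.

Lemma negH2_addl_lt a b e : 0 < a -> 0 < e < b -> negH2 (a + e) b < negH2 a b.
Proof.
move=> a_gt0 [e_gt0 e_lt].
have := @negH2_change a (a + e) b a_gt0 ltac:(lra) ltac:(lra).
have : ln (a + e) < ln (a + b) by apply: ln_increasing; lra.
nra.
Qed.

Lemma negH2_transfer_lt a b a' b' e0 : 0 < a -> 0 < b -> 0 < a' -> 0 < b' ->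
  a * b' < a' * b -> 0 < e0 -> exists e, 0 < e < e0 /\
    negH2 (a + e) b + negH2 (a' - e) b' < negH2 a b + negH2 a' b'.
Proof.
move=> a_gt0 b_gt0 a'_gt0 b'_gt0 ab_lt e0_gt0.
set d := a' * b - a * b'; set S := a + b + a' + b'.
have d_gt0 : 0 < d by rewrite /d; lra.
have S_gt0 : 0 < S by rewrite /S; lra.
have [m [m_gt0 [m_e0 [m_a' m_dS]]]] : exists m, 0 < m /\ m <= e0 /\ m <= a' /\ m <= d / S.
  exists (Rmin e0 (Rmin a' (d / S))); split; [|split; [|split]].
  - by apply: Rmin_glb_lt => //; apply: Rmin_glb_lt => //; apply: Rdiv_lt_0_compat.
  - exact: Rmin_l.
  - by have := Rmin_r e0 (Rmin a' (d / S)); have := Rmin_l a' (d / S); lra.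
  - by have := Rmin_r e0 (Rmin a' (d / S)); have := Rmin_r a' (d / S); lra.
have mS_le : m * S <= d.
  by have := Rmult_le_compat_r S _ _ (Rlt_le _ _ S_gt0) m_dS; rewrite /Rdiv Rmult_assoc Rinv_l; lra.
exists (m / 2); split; first lra.
(* The bounds of [negH2_change] add up to [e (ln ((a + e) (a' + b')) - ln ((a + b) (a' - e)))],
   which is negative for [e <= d / (2 S)]. *)
have : ln ((a + m / 2) * (a' + b')) < ln ((a + b) * (a' - m / 2)).
  apply: ln_increasing; first by apply: Rmult_lt_0_compat; lra.
  by rewrite /S /d in mS_le; nra.
rewrite !ln_mult; try lra.
have := @negH2_change a (a + m / 2) b a_gt0 ltac:(lra) b_gt0.
have := @negH2_change a' (a' - m / 2) b' a'_gt0 ltac:(lra) b'_gt0.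
nra.
Qed.

Definition indR {T : eqType} (a b : T) : R := if a == b then 1 else 0.

Lemma sum_indR_sub (T : finType) (a b : T) : a != b ->
  \big[Rplus/0]_i (indR i a - indR i b) = 0.
Proof.
move=> ab; rewrite (sumR_supp2 ab) => [|i ia ib]; rewrite /indR ?eqxx.
- by rewrite (negbTE ab) eq_sym (negbTE ab); ring.
- by rewrite (negbTE ia) (negbTE ib); ring.
Qed.

Section Moves.
Variables X Y : finType.
Implicit Types Q D : fun3 X Y.

Definition add_dir Q D (c : R) : fun3 X Y := fun t x y => Q t x y + c * D t x y.

(* The basic moves of the transportation polytope Delta_P: they change the mass of
   T = t at the corners of the rectangle {xa, xb} x {ya, yb} by +1, -1, -1, +1. *)
Definition basic_move (t : bool) (xa xb : X) (ya yb : Y) : fun3 X Y :=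
  fun s x y => if s == t then (indR x xa - indR x xb) * (indR y ya - indR y yb) else 0.

Lemma pTX_basic_move t xa xb ya yb s x : ya != yb ->
  pTX (basic_move t xa xb ya yb) s x = 0.
Proof.
move=> yab; rewrite /pTX /basic_move; case: (s == t); last by rewrite big1.
by rewrite -big_distrr /= sum_indR_sub // Rmult_0_r.
Qed.

Lemma pTY_basic_move t xa xb ya yb s y : xa != xb ->
  pTY (basic_move t xa xb ya yb) s y = 0.
Proof.
move=> xab; rewrite /pTY /basic_move; case: (s == t); last by rewrite big1.
by rewrite -big_distrl /= sum_indR_sub // Rmult_0_l.
Qed.

Lemma basic_move_bound t xa xb ya yb s x y : -1 <= basic_move t xa xb ya yb s x y <= 1.
Proof.
rewrite /basic_move /indR; case: (s == t); last lra.
by case: (x == xa); case: (x == xb); case: (y == ya); case: (y == yb); lra.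
Qed.

Lemma basic_move_lt0 t xa xb ya yb s x y : basic_move t xa xb ya yb s x y < 0 ->
  s = t /\ (x = xa /\ y = yb \/ x = xb /\ y = ya).
Proof.
rewrite /basic_move /indR; case: eqP => [->|_]; last lra.
case: (x =P xa); case: (x =P xb); case: (y =P ya); case: (y =P yb); intuition lra.
Qed.

Definition cellH Q x y := negH2 (Q true x y) (Q false x y).

Lemma condH_cellH Q : condH Q = - \big[Rplus/0]_x \big[Rplus/0]_y cellH Q x y.
Proof.
rewrite /condH /sum3 big_bool /= -big_split; congr (- _); apply: eq_bigr => x _.
by rewrite -big_split; apply: eq_bigr => y _; rewrite /cellH /negH2 /xlnr /pXY big_bool.
Qed.

Lemma cellH_t Q t x y : cellH Q x y = negH2 (Q t x y) (Q (~~ t) x y).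
Proof. by case: t; rewrite // negH2C. Qed.

Lemma condH_local Q Q' xa xb ya yb : xa != xb -> ya != yb ->
  (forall t x y, x != xa -> x != xb -> Q' t x y = Q t x y) ->
  (forall t x y, y != ya -> y != yb -> Q' t x y = Q t x y) ->
  condH Q' = condH Q - (cellH Q' xa ya - cellH Q xa ya + (cellH Q' xa yb - cellH Q xa yb) +
                        (cellH Q' xb ya - cellH Q xb ya) + (cellH Q' xb yb - cellH Q xb yb)).
Proof.
move=> xab yab Q'x Q'y.
have row0 x : x != xa -> x != xb -> \big[Rplus/0]_y (cellH Q' x y - cellH Q x y) = 0.
  by move=> xa' xb'; apply: big1 => y _; rewrite /cellH !Q'x //; ring.
have col0 x y : y != ya -> y != yb -> cellH Q' x y - cellH Q x y = 0.
  by move=> ya' yb'; rewrite /cellH !Q'y //; ring.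
rewrite !condH_cellH.
have split_diff : \big[Rplus/0]_x \big[Rplus/0]_y cellH Q' x y =
    \big[Rplus/0]_x \big[Rplus/0]_y cellH Q x y +
    \big[Rplus/0]_x \big[Rplus/0]_y (cellH Q' x y - cellH Q x y).
  by rewrite -big_split; apply: eq_bigr => x _; rewrite -big_split; apply: eq_bigr => y _ /=; ring.
rewrite split_diff (sumR_supp2 xab row0) (sumR_supp2 yab (col0 xa)) (sumR_supp2 yab (col0 xb)); ring.
Qed.

Lemma condH_basic_move Q t xa xb ya yb e : xa != xb -> ya != yb ->
  (forall y, Q (~~ t) xb y = 0) ->
  condH (add_dir Q (basic_move t xa xb ya yb) e) = condH Q -
    (negH2 (Q t xa ya + e) (Q (~~ t) xa ya) - negH2 (Q t xa ya) (Q (~~ t) xa ya) +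
     (negH2 (Q t xa yb - e) (Q (~~ t) xa yb) - negH2 (Q t xa yb) (Q (~~ t) xa yb))).
Proof.
move=> xab yab Qxb.
have yba : (yb == ya) = false by rewrite eq_sym (negbTE yab).
have move_negb x y : add_dir Q (basic_move t xa xb ya yb) e (~~ t) x y = Q (~~ t) x y.
  by rewrite /add_dir /basic_move; case: (t); rewrite /=; ring.
rewrite (condH_local (Q := Q) xab yab) => [|s x y xa' xb'|s x y ya' yb']; first last.
- by rewrite /add_dir /basic_move /indR (negbTE ya') (negbTE yb'); case: (s == t); ring.
- by rewrite /add_dir /basic_move /indR (negbTE xa') (negbTE xb'); case: (s == t); ring.
rewrite !(cellH_t _ t) !move_negb !Qxb !negH2_0r.
rewrite /add_dir /basic_move eqxx /indR !eqxx (negbTE xab) (negbTE yab) yba.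
rewrite (_ : Q t xa ya + e * ((1 - 0) * (1 - 0)) = Q t xa ya + e); last ring.
rewrite (_ : Q t xa yb + e * ((1 - 0) * (0 - 1)) = Q t xa yb - e); last ring.
ring.
Qed.

End Moves.

Lemma is_dist_bounds (X Y : finType) (Q : fun3 X Y) t x y : is_dist Q -> 0 <= Q t x y <= 1.
Proof.
move=> [Q_ge0 Q1]; split=> //.
apply: (Rle_trans _ (pTX Q t x)); first exact: (sumR_ge_term (F := fun y => Q t x y)).
apply: (Rle_trans _ (pT Q t)).
  by apply: (sumR_ge_term (F := fun x => pTX Q t x)) => x'; apply: sumR_ge0.
rewrite -Q1; apply: (sumR_ge_term (F := fun t => pT Q t)) => t'.
by apply: sumR_ge0 => x'; apply: sumR_ge0.
Qed.

Section Perturbation.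
Variables (X Y : finType) (P : fun3 X Y).
Implicit Types Q R : fun3 X Y.

Lemma in_DeltaP_add_dir Q D c : in_DeltaP P Q ->
  (forall t x, pTX D t x = 0) -> (forall t y, pTY D t y = 0) ->
  (forall t x y, 0 <= add_dir Q D c t x y) -> in_DeltaP P (add_dir Q D c).
Proof.
move=> [[_ Q1] [QX QY]] DX DY QD_ge0.
have QDX t x : pTX (add_dir Q D c) t x = pTX Q t x.
  by rewrite /pTX /add_dir big_split -big_distrr /= -/(pTX D t x) DX; ring.
have QDY t y : pTY (add_dir Q D c) t y = pTY Q t y.
  by rewrite /pTY /add_dir big_split -big_distrr /= -/(pTY D t y) DY; ring.
split; [split|split] => // [|t x|t y]; rewrite ?QDX ?QDY //.
by rewrite -Q1; apply: eq_bigr => t _; apply: eq_bigr => x _; apply: QDX.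
Qed.

Lemma relint_shift Q R1 R2 : in_relint_DeltaP P Q -> in_DeltaP P R1 -> in_DeltaP P R2 ->
  exists e0, 0 < e0 /\ forall e, 0 < e < e0 ->
    in_DeltaP P (add_dir Q (fun t x y => R1 t x y - R2 t x y) e).
Proof.
move=> [QD [eps [eps_gt0 rel]]] R1D R2D; exists eps; split=> // e e_bd.
apply: rel => [|t x y].
- exists [:: (1, Q); (e, R1); (- e, R2)]; split; [|split].
  + by rewrite !big_cons big_nil /=; ring.
  + by move=> p /= [<-|[<-|[<-|[]]]].
  + by move=> t x y; rewrite !big_cons big_nil /= /add_dir; ring.
- have := is_dist_bounds t x y R1D.1; have := is_dist_bounds t x y R2D.1.
  rewrite /add_dir => R2_bd R1_bd; apply: Rabs_def1; nra.
Qed.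

Hypotheses (HP : is_dist P) (HpT : forall t, 0 < pT P t).

(* P(t) P(x | t) P(y | t): positive on every X_t x Y_t. *)
Definition ci_coupling : fun3 X Y := fun t x y => pTX P t x * pTY P t y / pT P t.

Lemma ci_coupling_in_DeltaP : in_DeltaP P ci_coupling.
Proof.
have [P_ge0 P1] := HP.
have pTne0 t : pT P t <> 0 by have := HpT t; lra.
have sum_pTY t : \big[Rplus/0]_y pTY P t y = pT P t by rewrite /pTY /pT exchange_big.
have CX t x : pTX ci_coupling t x = pTX P t x.
  rewrite /pTX /ci_coupling.
  under eq_bigr => y _ do rewrite /Rdiv Rmult_assoc (Rmult_comm (pTY P t y)) -Rmult_assoc.
  by rewrite -big_distrr /= sum_pTY -/(pTX P t x); field.
have CY t y : pTY ci_coupling t y = pTY P t y.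
  rewrite /pTY /ci_coupling.
  under eq_bigr => x _ do rewrite /Rdiv Rmult_assoc Rmult_comm.
  by rewrite -big_distrr /= -/(pT P t) -/(pTY P t y); field.
split; [split|split] => // [t x y|].
- apply: Rmult_le_pos; last by apply/Rlt_le/Rinv_0_lt_compat.
  by apply: Rmult_le_pos; apply: sumR_ge0.
- by rewrite -P1; apply: eq_bigr => t _; apply: eq_bigr => x _; apply: CX.
Qed.

Lemma ci_coupling_pos t x y : inXt P t x -> inYt P t y -> 0 < ci_coupling t x y.
Proof.
rewrite /inXt /inYt /ci_coupling => Px Py.
have pT_gt0 := HpT t.
have -> : pTX P t x * pTY P t y / pT P t = pTX P t x / pT P t * (pTY P t y / pT P t) * pT P t.
  by field; lra.
by apply: Rmult_lt_0_compat => //; apply: Rmult_lt_0_compat.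
Qed.

Lemma relint_pos Q t x y : in_relint_DeltaP P Q -> inXt P t x -> inYt P t y -> 0 < Q t x y.
Proof.
move=> Qr Px Py; have [[Q_ge0 _] _] := Qr.1.
have [e0 [e0_gt0 shift]] := relint_shift Qr Qr.1 ci_coupling_in_DeltaP.
have [[shift_ge0 _] _] := shift (e0 / 2) ltac:(lra).
have := shift_ge0 t x y; rewrite /add_dir.
have := ci_coupling_pos Px Py; have := Q_ge0 t x y; nra.
Qed.

Lemma relint_basic_move Q t xa xb ya yb : in_relint_DeltaP P Q -> xa != xb -> ya != yb ->
  inXt P t xa -> inXt P t xb -> inYt P t ya -> inYt P t yb ->
  exists e0, 0 < e0 /\ forall e, 0 < e < e0 ->
    in_DeltaP P (add_dir Q (basic_move t xa xb ya yb) e).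
Proof.
move=> Qr xab yab Pxa Pxb Pya Pyb; have [[Q_ge0 _] _] := Qr.1.
set D := basic_move t xa xb ya yb.
have g_gt0 : 0 < Rmin (Q t xb ya) (Q t xa yb) by apply: Rmin_glb_lt; apply: relint_pos.
have g_le1 := Rmin_l (Q t xb ya) (Q t xa yb); have g_le2 := Rmin_r (Q t xb ya) (Q t xa yb).
set g := Rmin _ _ in g_gt0 g_le1 g_le2.
have QgD : in_DeltaP P (add_dir Q D g).
  apply: in_DeltaP_add_dir Qr.1 _ _ _ => [s x|s y|s x y]; first exact: pTX_basic_move.
    exact: pTY_basic_move.
  have := Q_ge0 s x y; have := basic_move_bound t xa xb ya yb s x y.
  rewrite /add_dir -/D; case: (Rle_lt_dec 0 (D s x y)) => [|/basic_move_lt0]; first nra.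
  by case=> -> [[-> ->]|[-> ->]]; nra.
have [e0 [e0_gt0 shift]] := relint_shift Qr QgD Qr.1.
exists (e0 * g); split=> [|e e_bd]; first nra.
have -> : add_dir Q D e = add_dir Q (fun s x y => add_dir Q D g s x y - Q s x y) (e / g).
  by do 3 apply: functional_extensionality => ?; rewrite /add_dir; field; lra.
apply: shift; split; first by apply: Rdiv_lt_0_compat; lra.
by apply: (Rmult_lt_reg_r g) => //; rewrite /Rdiv Rmult_assoc Rinv_l; lra.
Qed.

End Perturbation.

Lemma cross_negb (X Y : finType) (M : fun3 X Y) t x y y' :
  M t x y * M (~~ t) x y' = M t x y' * M (~~ t) x y ->
  M true x y * M false x y' = M true x y' * M false x y.
Proof. by case: t => //= E; lra. Qed.

Section Argmax.
Variables (X Y : finType) (P Q : fun3 X Y).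
Hypotheses (HP : is_dist P) (HpT : forall t, 0 < pT P t).
Hypotheses (HQ : is_argmax_condH P Q) (HQr : in_relint_DeltaP P Q).

(* Row [xb] carries no mass of [~~ t], so its cells have zero entropy before and after
   the move: only the cells [(xa, ya)] and [(xa, yb)] matter. *)
Lemma argmax_basic_move t xa xb ya yb : xa != xb -> ya != yb ->
  inXt P t xa -> inXt P t xb -> ~ inXt P (~~ t) xb -> inYt P t ya -> inYt P t yb ->
  exists e0, 0 < e0 /\ forall e, 0 < e < e0 ->
    negH2 (Q t xa ya) (Q (~~ t) xa ya) + negH2 (Q t xa yb) (Q (~~ t) xa yb) <=
    negH2 (Q t xa ya + e) (Q (~~ t) xa ya) + negH2 (Q t xa yb - e) (Q (~~ t) xa yb).
Proof.
move=> xab yab Pxa Pxb Pxb' Pya Pyb.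
have [e0 [e0_gt0 move_in]] := relint_basic_move HP HpT HQr xab yab Pxa Pxb Pya Pyb.
have Qxb := in_DeltaP_eq0_notXt HP HQ.1 Pxb'.
exists e0; split=> // e e_bd; have := HQ.2 _ (move_in e e_bd).
by rewrite condH_basic_move //; lra.
Qed.

Lemma argmax_exclusive_XY_absurd t x0 y0 x1 y1 :
  (forall s, inXt P s x0) -> (forall s, inYt P s y0) ->
  inXt P t x1 -> ~ inXt P (~~ t) x1 -> inYt P t y1 -> ~ inYt P (~~ t) y1 -> False.
Proof.
move=> Px0 Py0 Px1 Px1' Py1 Py1'.
have x01 : x0 != x1 by apply/eqP=> E; apply: Px1'; rewrite -E.
have y01 : y0 != y1 by apply/eqP=> E; apply: Py1'; rewrite -E.
have a_gt0 := relint_pos HP HpT HQr (Px0 t) (Py0 t).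
have b_gt0 := relint_pos HP HpT HQr (Px0 (~~ t)) (Py0 (~~ t)).
have [e0 [e0_gt0 gain]] := argmax_basic_move x01 y01 (Px0 t) Px1 Px1' (Py0 t) Py1.
have m_gt0 : 0 < Rmin e0 (Q (~~ t) x0 y0) by apply: Rmin_glb_lt.
have := Rmin_l e0 (Q (~~ t) x0 y0); have := Rmin_r e0 (Q (~~ t) x0 y0).
set m := Rmin _ _ in m_gt0 * => m_le_b m_le_e0.
have := gain (m / 2) ltac:(lra).
rewrite (in_DeltaP_eq0_notYt HP HQ.1 Py1') !negH2_0r.
have := @negH2_addl_lt (Q t x0 y0) (Q (~~ t) x0 y0) (m / 2) a_gt0 ltac:(lra).
lra.
Qed.

Lemma argmax_cross_le t x1 x y y' : inXt P t x1 -> ~ inXt P (~~ t) x1 ->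
  inXt P t x -> inXt P (~~ t) x -> inYt P t y -> inYt P (~~ t) y ->
  inYt P t y' -> inYt P (~~ t) y' ->
  Q t x y' * Q (~~ t) x y <= Q t x y * Q (~~ t) x y'.
Proof.
move=> Px1 Px1' Pxt Pxn Pyt Pyn Py't Py'n.
have [<-|yy'] := eqVneq y y'; first lra.
have xx1 : x != x1 by apply/eqP=> E; apply: Px1'; rewrite -E.
apply: Rnot_lt_le => cross_lt.
have [e0 [e0_gt0 gain]] := argmax_basic_move xx1 yy' Pxt Px1 Px1' Pyt Py't.
have [e [e_bd lt]] := negH2_transfer_lt (relint_pos HP HpT HQr Pxt Pyt)
  (relint_pos HP HpT HQr Pxn Pyn) (relint_pos HP HpT HQr Pxt Py't)
  (relint_pos HP HpT HQr Pxn Py'n) cross_lt e0_gt0.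
by have := gain e e_bd; lra.
Qed.

Lemma CI_cond_on_Yt t x0 y0 x1 : (forall s, inXt P s x0) -> (forall s, inYt P s y0) ->
  inXt P t x1 -> ~ inXt P (~~ t) x1 -> CI_T_Y_given_X (cond_on_Yt P Q t).
Proof.
move=> Px0 Py0 Px1 Px1'.
have Yt_sub y : inYt P t y -> inYt P (~~ t) y.
  move=> Py; case: (inYt_dec P (~~ t) y) => // Py'.
  by case: (argmax_exclusive_XY_absurd Px0 Py0 Px1 Px1' Py Py').
have cross x y y' : inYt P t y -> inYt P t y' ->
    Q true x y * Q false x y' = Q true x y' * Q false x y.
  move=> Py Py'; apply: (@cross_negb _ _ _ t).
  case: (inXt_dec P t x) => Pxt; last by rewrite !(in_DeltaP_eq0_notXt HP HQ.1 Pxt); ring.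
  case: (inXt_dec P (~~ t) x) => Pxn; last by rewrite !(in_DeltaP_eq0_notXt HP HQ.1 Pxn); ring.
  by apply: Rle_antisym; apply: (argmax_cross_le Px1 Px1'); auto.
apply: CI_T_Y_given_X_of_cross => x y y'; rewrite /cond_on_Yt /indYt.
set Z := sum3 _.
case: (Rlt_dec 0 (pTY P t y / pT P t)) => Py; case: (Rlt_dec 0 (pTY P t y' / pT P t)) => Py';
  rewrite /= /Rdiv; try ring.
rewrite [LHS](_ : _ = Q true x y * Q false x y' * (/ Z * / Z)); last ring.
by rewrite cross //; ring.
Qed.

End Argmax.

Lemma CI_cond_on_Xt (X Y : finType) (P Q : fun3 X Y) t x0 y0 y1 :
  is_dist P -> (forall s, 0 < pT P s) -> is_argmax_condH P Q -> in_relint_DeltaP P Q ->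
  (forall s, inXt P s x0) -> (forall s, inYt P s y0) ->
  inYt P t y1 -> ~ inYt P (~~ t) y1 -> CI_T_X_given_Y (cond_on_Xt P Q t).
Proof.
move=> /is_dist_swapXY HP HpT /is_argmax_condH_swapXY HQ /in_relint_DeltaP_swapXY HQr Px0 Py0.
rewrite -(inXt_swapXY P) -(inXt_swapXY P (~~ t)) => Py1 Py1'.
apply: CI_T_X_given_Y_of_swapXY; rewrite swapXY_cond_on_Xt.
apply: (CI_cond_on_Yt HP _ HQ HQr (x0 := y0) (y0 := x0) _ _ Py1 Py1') => s.
- by rewrite pT_swapXY.
- by rewrite inXt_swapXY.
- by rewrite inYt_swapXY.
Qed.

Theorem mainTheorem14 (X Y : finType) (P : fun3 X Y) :
  is_dist P -> 0 < pT P false -> 0 < pT P true ->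
  ((~ exists x, inXt P false x /\ inXt P true x) ->
     forall Q, in_DeltaP P Q -> CI_T_Y_given_X Q) /\
  ((~ exists y, inYt P false y /\ inYt P true y) ->
     forall Q, in_DeltaP P Q -> CI_T_X_given_Y Q) /\
  ((exists x, inXt P false x /\ inXt P true x) ->
   (exists y, inYt P false y /\ inYt P true y) ->
     ((exists t, (exists x, inXt P t x /\ ~ inXt P (~~ t) x) /\
                 (exists y, inYt P t y /\ ~ inYt P (~~ t) y)) ->
        forall Q, is_argmax_condH P Q -> ~ in_relint_DeltaP P Q) /\
     (forall t, (exists x, inXt P t x /\ ~ inXt P (~~ t) x) ->
        forall Qs, in_relint_DeltaP P Qs -> is_argmax_condH P Qs ->
          CI_T_Y_given_X (cond_on_Yt P Qs t)) /\
     (forall t, (exists y, inYt P t y /\ ~ inYt P (~~ t) y) ->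
        forall Qs, in_relint_DeltaP P Qs -> is_argmax_condH P Qs ->
          CI_T_X_given_Y (cond_on_Xt P Qs t))).
Proof.
move=> HP pT0 pT1; have HpT : forall t, 0 < pT P t by case.
split; first by move=> disj Q; apply: CI_T_Y_given_X_of_disjoint.
split; first by move=> disj Q; apply: CI_T_X_given_Y_of_disjoint.
move=> [x0 [Px00 Px01]] [y0 [Py00 Py01]].
have Px0 : forall s, inXt P s x0 by case.
have Py0 : forall s, inYt P s y0 by case.
split; [|split].
- move=> [t [[x1 [Px1 Px1']] [y1 [Py1 Py1']]]] Q HQ HQr.
  exact: (argmax_exclusive_XY_absurd HP HpT HQ HQr Px0 Py0 Px1 Px1' Py1 Py1').
- move=> t [x1 [Px1 Px1']] Q HQr HQ.
  exact: (CI_cond_on_Yt HP HpT HQ HQr Px0 Py0 Px1 Px1').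
- move=> t [y1 [Py1 Py1']] Q HQr HQ.
  exact: (CI_cond_on_Xt HP HpT HQ HQr Px0 Py0 Py1 Py1').
Qed.
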